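(* Let $r\ge1$, let $\mathcal{A}:\mathbb{C}^{m\times n}\to\mathbb{C}^p$ be linear with $\delta_{4r}(\mathcal{A})\le0.04$, let $X_0\in\mathbb{C}^{m\times n}$ be arbitrary, let $\nu\in\mathbb{C}^p$ and $b=\mathcal{A}X_0+\nu$, and let $X_{0,r}$ be a best rank-$r$ approximation of $X_0$ in Frobenius norm. Then $b=\mathcal{A}X_{0,r}+\widetilde{\nu}$ where $$\|\widetilde{\nu}\|_2\le1.02\left[\|X_0-X_{0,r}\|_F+\frac1{\sqrt r}\|X_0-X_{0,r}\|_*\right]+\|\nu\|_2.$$
   Context: $\|\cdot\|_2$ is the Euclidean norm, $\|\cdot\|_F$ the Frobenius norm, $\|\cdot\|_*$ the nuclear norm. $\delta_s(\mathcal{A})$ is the smallest $\delta\ge0$ such that $(1-\delta)\|X\|_F^2\le\|\mathcal{A}X\|_2^2\le(1+\delta)\|X\|_F^2$ for all $X$ with $\mathrm{rank}(X)\le s$. *)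

(* Scalars: an arbitrary numClosedFieldType C (e.g. the complex numbers). *)
From HB Require Import structures.
From mathcomp Require Import all_boot all_order all_algebra.
From mathcomp Require Export sesquilinear spectral.
Set Implicit Arguments. Unset Strict Implicit. Unset Printing Implicit Defensive.
Import Order.TTheory GRing.Theory Num.Theory.
Local Open Scope ring_scope.
Local Open Scope sesquilinear_scope.

Definition norm2 {C : numClosedFieldType} {p : nat} (v : 'cV[C]_p) : C :=
  sqrtC (\sum_(i < p) `|v i 0| ^+ 2).

Definition frob {C : numClosedFieldType} {m n : nat} (X : 'M[C]_(m, n)) : C :=
  sqrtC (\sum_(i < m) \sum_(j < n) `|X i j| ^+ 2).

Definition gram_eigenvalues {C : numClosedFieldType} {m n : nat}
  (X : 'M[C]_(m, n)) : seq C :=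
  sval (closed_field_poly_normal (char_poly (X ^t* *m X))).

(* Nuclear norm = sum of the singular values, i.e. of the square roots of the
   eigenvalues of X^* X (extra zero singular values do not contribute). *)
Definition nuclear {C : numClosedFieldType} {m n : nat} (X : 'M[C]_(m, n)) : C :=
  \sum_(z <- gram_eigenvalues X) sqrtC z.

Definition rip_ineq {C : numClosedFieldType} {m n p : nat}
  (A : 'M[C]_(m, n) -> 'cV[C]_p) (s : nat) (delta : C) : Prop :=
  forall X : 'M[C]_(m, n), (\rank X <= s)%N ->
    (1 - delta) * frob X ^+ 2 <= norm2 (A X) ^+ 2 /\
    norm2 (A X) ^+ 2 <= (1 + delta) * frob X ^+ 2.

Definition rip_const {C : numClosedFieldType} {m n p : nat}
  (A : 'M[C]_(m, n) -> 'cV[C]_p) (s : nat) (delta : C) : Prop :=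
  [/\ 0 <= delta, rip_ineq A s delta &
      forall d, 0 <= d -> rip_ineq A s d -> delta <= d].

Definition best_rank_approx {C : numClosedFieldType} {m n : nat}
  (r : nat) (X Y : 'M[C]_(m, n)) : Prop :=
  (\rank Y <= r)%N /\
  forall Z : 'M[C]_(m, n), (\rank Z <= r)%N -> frob (X - Y) <= frob (X - Z).

(* Writing [X0 = X0r + E], one may take [nut = A E + nu] (for any [X0r], optimal or
   not), so everything reduces to [|A E| <= c (|E|_F + |E|_* / sqrt r)] whenever
   [|A B| <= c |B|_F] on matrices of rank at most [r]; the RIP with [delta <= 0.04]
   gives this with [c = 1.02], as [1 + delta <= 1.02^2].
   Split [E] along the eigenvectors of [E^* E] (the singular value decomposition)
   into blocks [E_0, E_1, ...] carrying the [r] largest remaining singular values.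
   Then [|A E_0| <= c |E|_F], and since every singular value in [E_(i+1)] is at most
   the mean of those in [E_i], [|E_(i+1)|_F <= (sum of singular values in E_i) / sqrt r];
   summing over the blocks yields the nuclear-norm term. *)

From HB Require Import structures.
From mathcomp Require Import all_boot all_order all_algebra.
From mathcomp Require Import zify ring.
Import Order.TTheory GRing.Theory Num.Theory.
Local Open Scope ring_scope.
Local Open Scope sesquilinear_scope.
Set Implicit Arguments.
Unset Strict Implicit.
Unset Printing Implicit Defensive.

Section Norms.
Variable C : numClosedFieldType.

Lemma norm2_ge0 p (v : 'cV[C]_p) : 0 <= norm2 v.
Proof. by rewrite sqrtC_ge0 sumr_ge0 // => i _; rewrite exprn_ge0. Qed.

Lemma norm2D p (u v : 'cV[C]_p) : norm2 (u + v) <= norm2 u + norm2 v.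
Proof.
have norm2E (w : 'cV[C]_p) : norm2 w = sqrtC (dotmx w^T w^T).
  rewrite /norm2 dotmxE !mxE; congr sqrtC; apply: eq_bigr => i _.
  by rewrite !mxE normCK.
by rewrite !norm2E linearD; apply: triangle_lerif.
Qed.

Lemma frob_ge0 m n (X : 'M[C]_(m, n)) : 0 <= frob X.
Proof.
by rewrite sqrtC_ge0 sumr_ge0 // => i _; rewrite sumr_ge0 // => j _; rewrite exprn_ge0.
Qed.

Lemma frob_sqr m n (X : 'M[C]_(m, n)) : frob X ^+ 2 = \tr (X^t* *m X).
Proof.
rewrite /frob sqrtCK /mxtrace exchange_big; apply: eq_bigr => j _.
by rewrite !mxE; apply: eq_bigr => i _; rewrite !mxE normCK mulrC.
Qed.

End Norms.

Lemma char_poly_conj (R : comNzRingType) n (Q A M : 'M[R]_n) :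
  M *m Q = 1%:M -> char_poly (Q *m A *m M) = char_poly A.
Proof.
move=> MQ; have QM := mulmx1C MQ; rewrite /char_poly.
have -> : char_poly_mx (Q *m A *m M) =
    map_mx polyC Q *m char_poly_mx A *m map_mx polyC M.
  rewrite /char_poly_mx mulmxBr mulmxBl -!map_mxM; congr (_ - _).
  by rewrite mul_mx_scalar -scalemxAl -map_mxM QM map_mx1 scalemx1.
by rewrite !det_mulmx mulrAC -det_mulmx -map_mxM QM map_mx1 det1 mul1r.
Qed.

Lemma char_poly_diag (R : comNzRingType) n (D : 'rV[R]_n) :
  char_poly (diag_mx D) = \prod_(j < n) ('X - (D 0 j)%:P).
Proof.
rewrite char_poly_trig; first by apply: eq_bigr => j _; rewrite mxE eqxx.
by apply/is_trig_mxP => i j lt_ij; rewrite mxE -val_eqE /= (ltn_eqF lt_ij) mulr0n.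
Qed.

Section GramSpectrum.
Variables (C : numClosedFieldType) (m n : nat) (E : 'M[C]_(m, n)).

Definition gram_eig (j : 'I_n) : C := spectral_diag (E^t* *m E) 0 j.

Definition eig_mask (S : {set 'I_n}) : 'M[C]_n := diag_mx (\row_j ((j \in S)%:R : C)).

(* The part of [E] living on the eigenvectors of [E^* E] indexed by [S]; it
   plays the role of a block of terms of the singular value decomposition. *)
Definition eigen_part (S : {set 'I_n}) : 'M[C]_(m, n) :=
  E *m (spectralmx (E^t* *m E))^t* *m eig_mask S *m spectralmx (E^t* *m E).

Let G := E^t* *m E.
Let P := spectralmx G.

Let P_unitary : P *m P^t* = 1%:M.
Proof. exact/unitarymxP/spectral_unitarymx. Qed.

Let gram_spectral : G = P^t* *m diag_mx (spectral_diag G) *m P.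
Proof.
have G_normal : G \is normalmx.
  by apply/normalmxP; rewrite /G trmx_mul map_mxM trmxCK.
by have := orthomx_spectralP G_normal; rewrite invmx_unitary ?spectral_unitarymx.
Qed.

Let gram_diag : P *m G *m P^t* = diag_mx (spectral_diag G).
Proof. by rewrite {1}gram_spectral !mulmxA P_unitary mul1mx -mulmxA P_unitary mulmx1. Qed.

Lemma eigen_partT : eigen_part setT = E.
Proof.
rewrite /eigen_part.
have -> : eig_mask setT = 1%:M by apply/matrixP => i j; rewrite !mxE in_setT.
by rewrite mulmx1 -mulmxA (mulmx1C P_unitary) mulmx1.
Qed.

Lemma eigen_part_split (T S : {set 'I_n}) :
  T \subset S -> eigen_part S = eigen_part T + eigen_part (S :\: T).
Proof.
move=> /subsetP TS; rewrite /eigen_part -mulmxDl -mulmxDr; congr (_ *m _ *m _).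
apply/matrixP => i j; rewrite !mxE in_setD -mulrnDl.
by case: (boolP (i \in T)) => [/TS -> | _] /=; rewrite ?add0r ?addr0.
Qed.

Lemma rank_eigen_part S : (\rank (eigen_part S) <= #|S|)%N.
Proof.
apply: leq_trans (mxrankM_maxl _ _) _; apply: leq_trans (mxrankM_maxr _ _) _.
rewrite /eig_mask diag_mx_sum_delta -sum1_card [X in (_ <= X)%N]big_mkcond /=.
apply: (big_ind2 (fun (M : 'M[C]_n) k => \rank M <= k)%N) => [|M1 k1 M2 k2 le1 le2|i _].
- by rewrite mxrank0.
- by apply: leq_trans (mxrank_add _ _) _; apply: leq_add.
- by rewrite mxE; case: (i \in S); rewrite ?scale1r ?mxrank_delta ?scale0r ?mxrank0.
Qed.

Lemma frob_eigen_part S : frob (eigen_part S) ^+ 2 = \sum_(j in S) gram_eig j.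
Proof.
have maskC : (eig_mask S)^t* = eig_mask S.
  by rewrite tr_diag_mx map_diag_mx; congr diag_mx; apply/rowP => j; rewrite !mxE rmorph_nat.
rewrite frob_sqr.
have -> : (eigen_part S)^t* *m eigen_part S =
    P^t* *m (eig_mask S *m diag_mx (spectral_diag G) *m eig_mask S) *m P.
  by rewrite -gram_diag /eigen_part !trmx_mul !map_mxM trmxCK maskC /G !mulmxA.
rewrite mxtrace_mulC !mulmxA P_unitary mul1mx !mulmx_diag mxtrace_diag.
rewrite [RHS]big_mkcond; apply: eq_bigr => j _; rewrite !mxE.
by case: (j \in S); rewrite ?mul1r ?mulr1 ?mul0r.
Qed.

Lemma gram_eig_ge0 j : 0 <= gram_eig j.
Proof. by have := frob_eigen_part [set j]; rewrite big_set1 => <-; rewrite exprn_ge0 ?frob_ge0. Qed.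

Lemma frob_eigen_part_le S : frob (eigen_part S) <= frob E.
Proof.
rewrite -ler_sqr ?nnegrE ?frob_ge0 // -[in X in _ <= X]eigen_partT !frob_eigen_part.
rewrite [X in _ <= X](big_setID S) /= setTI lerDl sumr_ge0 // => j _; exact: gram_eig_ge0.
Qed.

Lemma nuclear_gram_eig : nuclear E = \sum_j sqrtC (gram_eig j).
Proof.
rewrite /nuclear /gram_eigenvalues; case: closed_field_poly_normal => s /= charE.
have : perm_eq s [seq gram_eig j | j <- enum 'I_n].
  apply: prod_XsubC_eq; rewrite big_map big_enum /= -char_poly_diag.
  rewrite -(char_poly_conj _ P_unitary) -gram_spectral -/G charE.
  by rewrite (monicP (char_poly_monic _)) scale1r.
by move=> s_perm; rewrite (perm_big _ s_perm) big_map big_enum.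
Qed.

End GramSpectrum.

Lemma real_argmax (R : numDomainType) (I : eqType) (f : I -> R) (x0 : I) (s : seq I) :
  (forall i, f i \is Num.real) ->
  exists2 x, x \in x0 :: s & {in x0 :: s, forall y, f y <= f x}.
Proof.
move=> f_real; elim: s x0 => [|x1 s IHs] x0.
  by exists x0 => [|y]; rewrite ?mem_seq1 // => /eqP->.
have [x xs x_max] := IHs x1.
have [le_x0x | le_xx0] := orP (real_leVge (f_real x0) (f_real x)).
  by exists x => [|y]; rewrite inE ?xs ?orbT // => /orP[/eqP-> | /x_max].
exists x0 => [|y]; rewrite inE ?eqxx // => /orP[/eqP-> // | /x_max le_yx].
exact: le_trans le_yx le_xx0.
Qed.

Lemma exists_top_subset (R : numDomainType) (I : finType) (f : I -> R)
    (S : {set I}) (t : nat) :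
  (forall i, f i \is Num.real) -> (t <= #|S|)%N ->
  exists T : {set I}, [/\ T \subset S, #|T| = t &
    {in T & S :\: T, forall x y, f y <= f x}].
Proof.
move=> f_real; elim: t => [|t IHt] le_tS.
  by exists set0; split=> [||x y]; rewrite ?sub0set ?cards0 ?inE.
have [T [TS cardT T_top]] := IHt (ltnW le_tS).
have /set0Pn[x0 x0_rest] : S :\: T != set0.
  by rewrite -cards_eq0 cardsD (setIidPr TS) cardT subn_eq0 -ltnNge.
have [x x_rest x_max] := real_argmax x0 (enum (S :\: T)) f_real.
have restE y : (y \in x0 :: enum (S :\: T)) = (y \in S :\: T).
  by rewrite inE mem_enum; case: eqP => // ->.
rewrite restE in x_rest; move: (x_rest); rewrite in_setD => /andP[xT xS].
exists (x |: T); split=> [||u y].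
- by rewrite subUset sub1set xS TS.
- by rewrite cardsU1 xT cardT.
rewrite !in_setD !in_setU1 negb_or => /orP[/eqP-> | uT] /andP[/andP[yx yT] yS].
  by apply: x_max; rewrite restE in_setD yT.
by apply: T_top; rewrite ?in_setD ?yT.
Qed.

Section LowRankBound.
Variables (C : numClosedFieldType) (m n p : nat).
Variables (A : {linear 'M[C]_(m, n) -> 'cV[C]_p}) (r : nat) (c : C).
Hypotheses (r_gt0 : (0 < r)%N) (c_ge0 : 0 <= c).
Hypothesis A_low_rank : forall B, (\rank B <= r)%N -> norm2 (A B) <= c * frob B.
Variable E : 'M[C]_(m, n).

Let d := gram_eig E.
Let k := (sqrtC (r%:R : C))^-1.

Let r_neq0 : r%:R != 0 :> C.
Proof. by rewrite pnatr_eq0 -lt0n. Qed.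

Let k_ge0 : 0 <= k.
Proof. by rewrite invr_ge0 sqrtC_ge0 ler0n. Qed.

Let sqrt_gram_eig_ge0 j : 0 <= sqrtC (d j).
Proof. by rewrite sqrtC_ge0 gram_eig_ge0. Qed.

Lemma top_split (S : {set 'I_n}) : exists T : {set 'I_n},
  [/\ T \subset S, #|T| = minn r #|S| &
    forall j, j \in S :\: T -> r%:R * sqrtC (d j) <= \sum_(t in T) sqrtC (d t)].
Proof.
have d_real j : d j \is Num.real by rewrite ger0_real ?gram_eig_ge0.
have [T [TS cardT T_top]] := exists_top_subset d_real (geq_minr r #|S|).
exists T; split=> // j jST.
have cardT_r : #|T| = r.
  have : (0 < #|S :\: T|)%N by apply/card_gt0P; exists j.
  by rewrite cardsD (setIidPr TS) cardT; lia.
rewrite mulr_natl -cardT_r -sumr_const; apply: ler_sum => t tT.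
by rewrite ler_sqrtC ?nnegrE ?gram_eig_ge0 ?T_top.
Qed.

Lemma frob_eigen_part_dominated (S : {set 'I_n}) s :
  (#|S| <= r)%N -> 0 <= s -> (forall j, j \in S -> r%:R * sqrtC (d j) <= s) ->
  frob (eigen_part E S) <= k * s.
Proof.
move=> le_Sr s_ge0 S_dom.
rewrite -ler_sqr ?nnegrE ?frob_ge0 ?mulr_ge0 // frob_eigen_part.
have -> : (k * s) ^+ 2 = (s / r%:R) ^+ 2 *+ r.
  by rewrite exprMn exprVn sqrtCK -mulr_natr; field.
have mean_ge0 : 0 <= (s / r%:R) ^+ 2 by rewrite exprn_ge0 ?divr_ge0 ?ler0n.
apply: le_trans (ler_wpMn2l mean_ge0 le_Sr); rewrite -sumr_const.
apply: ler_sum => j jS; rewrite -[gram_eig E j]sqrtCK ler_sqr ?nnegrE ?divr_ge0 ?ler0n //.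
by rewrite ler_pdivlMr ?ltr0n // mulrC S_dom.
Qed.

Lemma norm2_eigen_part_le (S : {set 'I_n}) s :
  0 <= s -> (forall j, j \in S -> r%:R * sqrtC (d j) <= s) ->
  norm2 (A (eigen_part E S)) <= c * (k * (s + \sum_(j in S) sqrtC (d j))).
Proof.
have [N] := ubnP #|S|; elim: N S s => // N IHN S s ltSN s_ge0 S_dom.
have [le_Sr | lt_rS] := leqP #|S| r.
  apply: le_trans (A_low_rank (leq_trans (rank_eigen_part E S) le_Sr)) _.
  apply: ler_wpM2l => //; apply: le_trans (frob_eigen_part_dominated le_Sr s_ge0 S_dom) _.
  by apply: ler_wpM2l => //; rewrite lerDl sumr_ge0.
have [T [TS cardT T_dom]] := top_split S.
have cardT_r : #|T| = r by rewrite cardT; apply/minn_idPl/ltnW.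
rewrite (eigen_part_split E TS) linearD; apply: le_trans (norm2D _ _) _.
have rank_T : (\rank (eigen_part E T) <= r)%N by rewrite -cardT_r rank_eigen_part.
have T_dom_s j : j \in T -> r%:R * sqrtC (d j) <= s by move/(subsetP TS); apply: S_dom.
have ltSTN : (#|S :\: T| < N)%N by rewrite cardsD (setIidPr TS) cardT_r; lia.
have sum_T_ge0 : 0 <= \sum_(t in T) sqrtC (d t) by rewrite sumr_ge0.
apply: le_trans (lerD (A_low_rank rank_T) (IHN _ _ ltSTN sum_T_ge0 T_dom)) _.
rewrite -mulrDr; apply: ler_wpM2l => //.
rewrite [X in _ <= k * (s + X)](big_setID T) /= (setIidPr TS).
rewrite !mulrDr !addrA !lerD2r.
exact: frob_eigen_part_dominated (eq_leq cardT_r) s_ge0 T_dom_s.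
Qed.

Lemma norm2_le_frob_nuclear : norm2 (A E) <= c * (frob E + k * nuclear E).
Proof.
have [T [TS cardT T_dom]] := top_split setT.
have le_Tr : (#|T| <= r)%N by rewrite cardT geq_minl.
rewrite -{1}(eigen_partT E) (eigen_part_split E TS) linearD.
apply: le_trans (norm2D _ _) _.
have sum_T_ge0 : 0 <= \sum_(t in T) sqrtC (d t) by rewrite sumr_ge0.
apply: le_trans (lerD (A_low_rank (leq_trans (rank_eigen_part E T) le_Tr))
                      (norm2_eigen_part_le sum_T_ge0 T_dom)) _.
rewrite -mulrDr; apply: ler_wpM2l => //; apply: lerD; first exact: frob_eigen_part_le.
rewrite nuclear_gram_eig -/d; apply: ler_wpM2l => //.
rewrite [X in _ <= X](bigID (mem T)) /=.
have setTDE : \sum_(j in setT :\: T) sqrtC (d j) = \sum_(j | j \notin T) sqrtC (d j).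
  by apply: eq_bigl => j; rewrite !inE andbT.
by rewrite setTDE.
Qed.

End LowRankBound.

Theorem lemma5 (C : numClosedFieldType) (m n p r : nat)
  (A : {linear 'M[C]_(m, n) -> 'cV[C]_p})
  (X0 X0r : 'M[C]_(m, n)) (nu b : 'cV[C]_p) :
  (1 <= r)%N ->
  (exists delta, rip_const A (4 * r) delta /\ delta <= 4%:R / 100%:R) ->
  b = A X0 + nu ->
  best_rank_approx r X0 X0r ->
  exists nut : 'cV[C]_p,
    b = A X0r + nut /\
    norm2 nut <= 102%:R / 100%:R *
      (frob (X0 - X0r) + (sqrtC (r%:R))^-1 * nuclear (X0 - X0r)) + norm2 nu.
Proof.
move=> r_gt0 [delta [[_ rip _] delta_le]] bE _.
set c : C := 102%:R / 100%:R.
have c_ge0 : 0 <= c by rewrite divr_ge0 ?ler0n.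
have one_delta_le : 1 + delta <= c ^+ 2.
  apply: le_trans (_ : 1 + 4%:R / 100%:R <= _); first by rewrite lerD2l.
  rewrite -subr_ge0 (_ : c ^+ 2 - _ = (2%:R / 100%:R) ^+ 2).
    by rewrite exprn_ge0 ?divr_ge0 ?ler0n.
  by rewrite /c; field.
have A_low_rank B : (\rank B <= r)%N -> norm2 (A B) <= c * frob B.
  move=> rkB; have [_ upper] := rip B (leq_trans rkB (leq_pmull r (ltn0Sn 3))).
  rewrite -ler_sqr ?nnegrE ?norm2_ge0 ?(mulr_ge0 c_ge0) ?frob_ge0 // exprMn.
  by apply: le_trans upper _; rewrite ler_wpM2r ?exprn_ge0 ?frob_ge0.
exists (A (X0 - X0r) + nu); split.
  by rewrite bE linearB addrA [A X0r + _]addrC subrK.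
apply: le_trans (norm2D _ _) _; rewrite lerD2r.
exact: norm2_le_frob_nuclear.
Qed.
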